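(* For every $\alpha\in(0,1)\cup(1,\infty)$ and discrete memoryless channels $\mathcal W_1$ (from $\mathcal X_1$ to $\mathcal Y_1$) and $\mathcal W_2$ (from $\mathcal X_2$ to $\mathcal Y_2$), all alphabets finite, $U_\alpha(\mathcal W_1\times\mathcal W_2)=U_\alpha(\mathcal W_1)+U_\alpha(\mathcal W_2)$, where $(\mathcal W_1\times\mathcal W_2)(y_1,y_2|x_1,x_2)=\mathcal W_1(y_1|x_1)\mathcal W_2(y_2|x_2)$.
   Context: For $\alpha\in(0,1)\cup(1,\infty)$, $D_\alpha(P\|Q)=\frac1{\alpha-1}\log\sum_{x:P(x)>0}P(x)^\alpha Q(x)^{1-\alpha}$ ($+\infty$ if $\alpha>1$ and $P\not\ll Q$). For a channel $\mathcal W$, $U_\alpha(\mathcal W)=\max_{P_X}\min_{Q_Y}D_\alpha(P_X\times Q_Y\|P_{XY})$ with $P_{XY}(x,y)=P_X(x)\mathcal W(y|x)$. *)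

From HB Require Import structures.
From mathcomp Require Import all_boot all_order all_algebra.
From mathcomp Require Import all_classical all_reals all_analysis.
Set Implicit Arguments. Unset Strict Implicit. Unset Printing Implicit Defensive.
Import Order.TTheory GRing.Theory Num.Theory.
Local Open Scope ring_scope.
Local Open Scope classical_set_scope.

Definition isDist (R : realType) (T : finType) (P : T -> R) : Prop :=
  (forall t, 0 <= P t) /\ \sum_(t : T) P t = 1.

Definition isChannel (R : realType) (X Y : finType) (W : X -> Y -> R) : Prop :=
  forall x, isDist (W x).

(* Renyi divergence of order a (a <> 1), with the conventions:
   +oo if a > 1 and P is not absolutely continuous w.r.t. Q;
   +oo if the sum is 0 (log 0 = -oo, and 1/(a-1) < 0 for a < 1). *)
Definition renyiDiv (R : realType) (T : finType) (a : R) (P Q : T -> R) : \bar R :=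
  let s := \sum_(t : T | 0 < P t) P t `^ a * Q t `^ (1 - a) in
  if (1 < a) && ~~ [forall t, (Q t == 0) ==> (P t == 0)] then +oo%E
  else if s == 0 then +oo%E
  else ((a - 1)^-1 * ln s)%:E.

Definition prodDist (R : realType) (X Y : finType) (P : X -> R) (Q : Y -> R)
  : X * Y -> R := fun xy => P xy.1 * Q xy.2.
Definition jointDist (R : realType) (X Y : finType) (P : X -> R) (W : X -> Y -> R)
  : X * Y -> R := fun xy => P xy.1 * W xy.1 xy.2.

Definition U_alpha (R : realType) (X Y : finType) (a : R) (W : X -> Y -> R) : \bar R :=
  ereal_sup [set ereal_inf [set renyiDiv a (prodDist P Q) (jointDist P W)
                             | Q in @isDist R Y]
            | P in @isDist R X].

Definition prodChannel (R : realType) (X1 Y1 X2 Y2 : finType)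
  (W1 : X1 -> Y1 -> R) (W2 : X2 -> Y2 -> R) : X1 * X2 -> Y1 * Y2 -> R :=
  fun x y => W1 x.1 y.1 * W2 x.2 y.2.

From mathcomp Require Import all_boot all_order all_algebra.
From mathcomp Require Import all_classical all_reals all_analysis.
From mathcomp Require Import ring lra.
Import Order.TTheory GRing.Theory Num.Theory.
Set Implicit Arguments. Unset Strict Implicit. Unset Printing Implicit Defensive.
Local Open Scope ring_scope.

(* Write g_x(Q) = sum_y Q(y)^a W(y|x)^(1-a), so that, up to the conventions for
   +oo, D_a(P x Q || P W) = (a-1)^-1 ln sum_x P(x) g_x(Q).

   U_a(W1) + U_a(W2) <= U_a(W1 x W2): for a product input P1 x P2 and any output
   law Q on Y1 x Y2, the sum for W1 x W2 splits along the first marginal q of Q as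
   sum_y1 A(y1) D(y1), where sum_y1 A(y1) is the sum for W1 at (P1, q) and D(y1)
   the sum for W2 at (P2, Q(.|y1)).  Replacing D by its extreme value (maximum for
   a < 1, minimum for a > 1) gives product output laws doing at least as well.

   U_a(W1 x W2) <= U_a(W1) + U_a(W2): each g_x is concave (a < 1) or convex
   (a > 1) in Q, so a theorem of alternatives for finitely many convex functions
   turns U_a(W) < w into a single output law Q with every g_x(Q) beyond
   exp(w(a-1)).  For W1 x W2 the rows factor at Q1 x Q2, which bounds the
   divergence of every input by w1 + w2.  Renyi divergences between probability
   distributions are nonnegative, so no value of U_a is -oo. *)

Section PowR.
Variable R : realType.
Implicit Types x y l p : R.

Lemma powR_convex_comb p l x y : 1 <= p -> 0 <= l <= 1 -> 0 <= x -> 0 <= y ->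
  (l * x + (1 - l) * y) `^ p <= l * x `^ p + (1 - l) * y `^ p.
Proof.
move=> p1 /andP[l0 l1] x0 y0.
have := convex_powR p1 (Itv01 l0 l1) (x:=x) (y:=y).
by rewrite !inE /= !in_itv /= !andbT !convRE => /(_ x0 y0).
Qed.

Lemma powR_concave_comb p l x y : 0 < p <= 1 -> 0 <= l <= 1 -> 0 <= x -> 0 <= y ->
  l * x `^ p + (1 - l) * y `^ p <= (l * x + (1 - l) * y) `^ p.
Proof.
move=> /andP[p0 p1] l01 x0 y0; have /andP[l0 l1] := l01.
have := @powR_convex_comb p^-1 l (x `^ p) (y `^ p).
rewrite invf_ge1 // -!powRrM !mulfV ?gt_eqF // !powRr1 // => /(_ p1 l01).
move/(_ (powR_ge0 _ _) (powR_ge0 _ _)) => /(ge0_ler_powR (ltW p0)).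
rewrite -powRrM mulVf ?gt_eqF // powRr1; last first.
  by rewrite addr_ge0 // mulr_ge0 ?powR_ge0 ?subr_ge0.
by apply; rewrite nnegrE ?powR_ge0 // addr_ge0 // mulr_ge0 ?subr_ge0.
Qed.

Lemma powR_weighted_amgm p x y : 0 < p < 1 -> 0 <= x -> 0 <= y ->
  x `^ p * y `^ (1 - p) <= p * x + (1 - p) * y.
Proof.
move=> /andP[p0 p1] x0 y0.
have q0 : 0 < 1 - p by rewrite subr_gt0.
have ip0 : 0 < p^-1 by rewrite invr_gt0.
have iq0 : 0 < (1 - p)^-1 by rewrite invr_gt0.
have := conjugate_powR (powR_ge0 x p) (powR_ge0 y (1 - p)) ip0 iq0.
rewrite !invrK -!powRrM !mulfV ?gt_eqF // !powRr1 // addrC subrK.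
by rewrite !(mulrC _ p) !(mulrC _ (1 - p)); apply.
Qed.

(* Bernoulli's inequality [u ^ p >= 1 + p (u - 1)] at [u = x / y], rescaled by [y]. *)
Lemma powR_tangent_le p x y : 1 < p -> 0 <= x -> 0 < y ->
  p * x - (p - 1) * y <= x `^ p * y `^ (1 - p).
Proof.
move=> p1 x0 y0; have p0 : 0 < p by apply: lt_trans p1.
set u := x `^ p * y `^ (1 - p).
have u0 : 0 <= u by rewrite mulr_ge0 ?powR_ge0.
have ip : 0 < p^-1 < 1 by rewrite invr_gt0 p0 invf_lt1.
have := powR_weighted_amgm ip u0 (ltW y0).
have -> : u `^ p^-1 * y `^ (1 - p^-1) = x.
  rewrite powRM ?powR_ge0 // -!powRrM mulfV ?gt_eqF // powRr1 // -mulrA -powRD.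
    by rewrite mulrBl mul1r mulfV ?gt_eqF // addrA subrK subrr powRr0 mulr1.
  by rewrite (gt_eqF y0) implybT.
move=> /(ler_wpM2l (ltW p0)); rewrite mulrDr mulrA mulfV ?gt_eqF // mul1r.
rewrite mulrA mulrBr mulr1 mulfV ?gt_eqF //; lra.
Qed.

End PowR.

Section ConvexAlternative.
Variables (R : realType) (T : Type) (mix : R -> T -> T -> T).

Definition mix_closed (C : T -> Prop) := forall l p q, 0 <= l <= 1 ->
  C p -> C q -> C (mix l p q).

Definition mix_convex (C : T -> Prop) (f : T -> R) := forall l p q, 0 <= l <= 1 ->
  C p -> C q -> f (mix l p q) <= l * f p + (1 - l) * f q.

Lemma mix_convex_sum (I : Type) (r : seq I) (C : T -> Prop) (w : I -> R)
    (g : I -> T -> R) :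
  (forall i, 0 <= w i) -> (forall i, mix_convex C (g i)) ->
  mix_convex C (fun p => \sum_(i <- r) w i * g i p).
Proof.
move=> w0 g_cvx l p q l01 Cp Cq; rewrite !mulr_sumr -big_split /=.
apply: ler_sum => i _; rewrite mulrCA [(1 - l) * _]mulrCA -mulrDr.
by apply: ler_wpM2l; [exact: w0 | exact: g_cvx].
Qed.

Lemma segment_both_neg (ha hb fa fb : R) : ha < 0 -> 0 <= hb -> fb < 0 -> 0 <= fa ->
  fa * hb < fb * ha -> exists t, 0 <= t <= 1 /\
    t * hb + (1 - t) * ha < 0 /\ t * fb + (1 - t) * fa < 0.
Proof.
move=> ha0 hb0 fb0 fa0 H.
have dh0 : 0 < hb - ha by lra.
have df0 : 0 < fa - fb by lra.
set t1 := - ha / (hb - ha); set t2 := fa / (fa - fb).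
have e1 : t1 * (hb - ha) = - ha by rewrite /t1 mulfVK // gt_eqF.
have e2 : t2 * (fa - fb) = fa by rewrite /t2 mulfVK // gt_eqF.
have t1_gt0 : 0 < t1 by rewrite /t1 divr_gt0 // oppr_gt0.
have t2_ge0 : 0 <= t2 by rewrite /t2 divr_ge0 // ltW.
have t1_le1 : t1 <= 1 by rewrite /t1 ler_pdivrMr // mul1r; lra.
have t2_lt1 : t2 < 1 by rewrite /t2 ltr_pdivrMr // mul1r; lra.
have t21 : t2 < t1.
  have : 0 < (t1 - t2) * ((hb - ha) * (fa - fb)) by nra.
  by rewrite pmulr_lgt0 ?mulr_gt0 // subr_gt0.
(* [t1] and [t2] are where the two affine maps cross zero; between them both are negative. *)
exists ((t1 + t2) / 2); split; first by apply/andP; split; lra.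
split; nra.
Qed.

Section TwoFunctions.
Variables (C : T -> Prop) (h f : T -> R).
Hypotheses (C_closed : mix_closed C) (h_convex : mix_convex C h)
  (f_convex : mix_convex C f).
Hypothesis not_both_neg : forall p, C p -> ~ (h p < 0 /\ f p < 0).

Let f_ge0 p : C p -> h p < 0 -> 0 <= f p.
Proof. by move=> Cp hp; rewrite leNgt; apply/negP => fp; exact: (not_both_neg Cp). Qed.

Let h_ge0 p : C p -> f p < 0 -> 0 <= h p.
Proof. by move=> Cp fp; rewrite leNgt; apply/negP => hp; exact: (not_both_neg Cp). Qed.

Lemma convex_cross_le a b : C a -> C b -> h a < 0 -> f b < 0 ->
  f b * h a <= f a * h b.
Proof.
move=> Ca Cb ha fb; rewrite leNgt; apply/negP => H.
have [t [t01 [Ht1 Ht2]]] := segment_both_neg ha (h_ge0 Cb fb) fb (f_ge0 Ca ha) H.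
apply: (not_both_neg (C_closed t01 Cb Ca)); split.
- exact: le_lt_trans (h_convex t01 Cb Ca) Ht1.
- exact: le_lt_trans (f_convex t01 Cb Ca) Ht2.
Qed.

(* Any [r] between the ratios [- f q / h q] (for [f q < 0]) and [f p / - h p]
   (for [h p < 0]) works; the cross inequality puts the former below the latter. *)
Lemma convex_ratio_bound a b : C a -> h a < 0 -> C b -> f b < 0 ->
  exists2 r, 0 <= r & forall p, C p -> 0 <= r * h p + f p.
Proof.
move=> Ca ha Cb fb.
have h_gt0 p : C p -> f p < 0 -> 0 < h p.
  move=> Cp fp; have := convex_cross_le Ca Cp ha fp.
  have := f_ge0 Ca ha; have := h_ge0 Cp fp; nra.
have ratio_le p q : C p -> h p < 0 -> C q -> f q < 0 -> - f q / h q <= f p / - h p.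
  move=> Cp hp Cq fq; have hq := h_gt0 q Cq fq.
  rewrite ler_pdivrMr // mulrAC ler_pdivlMr ?oppr_gt0 //.
  have := convex_cross_le Cp Cq hp fq; nra.
pose S := [set x : R | exists p, [/\ C p, f p < 0 & x = - f p / h p]]%classic.
have S_sup : has_sup S.
  split; first by exists (- f b / h b), b.
  by exists (f a / - h a) => _ [q [Cq fq ->]]; exact: ratio_le.
have le_supS p : C p -> f p < 0 -> - f p / h p <= sup S.
  by move=> Cp fp; apply: ub_le_sup S_sup.2 _ _; exists p.
have supS_ge0 : 0 <= sup S.
  by apply: le_trans (le_supS b Cb fb); rewrite divr_ge0 ?oppr_ge0 ?ltW ?h_gt0.
exists (sup S) => // p Cp; have [fp|fp] := ltP (f p) 0.
  have hp := h_gt0 p Cp fp; have := le_supS p Cp fp.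
  by rewrite ler_pdivrMr // => ?; nra.
have [hp|hp] := ltP (h p) 0; last by rewrite addr_ge0 // mulr_ge0.
have : sup S <= f p / - h p.
  by apply: ge_sup => [|_ [q [Cq fq ->]]]; [exists (- f b / h b), b | exact: ratio_le].
by rewrite ler_pdivlMr ?oppr_gt0 // => ?; nra.
Qed.

Lemma convex_alternative2 :
  exists mu, 0 <= mu <= 1 /\ forall p, C p -> 0 <= mu * h p + (1 - mu) * f p.
Proof.
have [[a [Ca ha]]|no_a] := boolp.pselect (exists a, C a /\ h a < 0); last first.
  exists 1; split=> [|p Cp]; first by rewrite ler01 lexx.
  rewrite subrr mul0r addr0 mul1r leNgt; apply/negP => hp; apply: no_a; by exists p.
have [[b [Cb fb]]|no_b] := boolp.pselect (exists b, C b /\ f b < 0); last first.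
  exists 0; split=> [|p Cp]; first by rewrite lexx ler01.
  rewrite subr0 mul0r add0r mul1r leNgt; apply/negP => fp; apply: no_b; by exists p.
have [r r0 Hr] := convex_ratio_bound Ca ha Cb fb.
exists (r / (1 + r)); split => [|p Cp].
  by rewrite divr_ge0 ?addr_ge0 //= ler_pdivrMr ?mul1r; lra.
have -> : r / (1 + r) * h p + (1 - r / (1 + r)) * f p = (r * h p + f p) / (1 + r).
  by field; lra.
by rewrite divr_ge0 ?Hr //; lra.
Qed.

End TwoFunctions.

Lemma convex_alternative_seq (I : eqType) (f : I -> T -> R) (i : I) (s : seq I)
    (C : T -> Prop) :
  uniq (i :: s) -> mix_closed C -> (forall j, mix_convex C (f j)) ->
  (forall p, C p -> ~ (forall j, j \in i :: s -> f j p < 0)) ->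
  exists lam : I -> R, (forall j, 0 <= lam j) /\ \sum_(j <- i :: s) lam j = 1 /\
    forall p, C p -> 0 <= \sum_(j <- i :: s) lam j * f j p.
Proof.
elim: s i C => [|j s IH] i C uniq_s C_closed f_convex not_all_neg.
  exists (fun k => (k == i)%:R); split=> [k|]; first by rewrite ler0n.
  rewrite big_seq1 eqxx; split=> // p Cp; rewrite big_seq1 eqxx mul1r leNgt.
  by apply/negP => fp; apply: (not_all_neg p Cp) => k; rewrite inE => /eqP ->.
(* Induction on the restriction of [C] to [f i < 0], then the two-function
   case combines [f i] with the combination found there. *)
case/andP: uniq_s => i_notin uniq_s.
pose C' p := C p /\ f i p < 0.
have C'_closed : mix_closed C'.
  move=> l p q l01 [Cp fp] [Cq fq]; split; first exact: C_closed.
  apply: le_lt_trans (f_convex i l p q l01 Cp Cq) _.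
  by case/andP: l01 => l0 l1; nra.
have [lam' [lam'_ge0 [lam'_sum lam'_C']]] : exists lam' : I -> R,
    (forall k, 0 <= lam' k) /\ \sum_(k <- j :: s) lam' k = 1 /\
    forall p, C' p -> 0 <= \sum_(k <- j :: s) lam' k * f k p.
  apply: (IH j C' uniq_s C'_closed) => [k l p q l01 [Cp _] [Cq _]|p [Cp fp] Hneg].
    exact: f_convex.
  apply: (not_all_neg p Cp) => k.
  by rewrite inE => /predU1P[-> //|]; exact: Hneg.
pose h p := \sum_(k <- j :: s) lam' k * f k p.
have h_convex : mix_convex C h by exact: mix_convex_sum.
have not_both_neg p : C p -> ~ (h p < 0 /\ f i p < 0).
  by move=> Cp [hp fp]; have := lam'_C' p (conj Cp fp); rewrite leNgt hp.
have [mu [/andP[mu0 mu1] Hmu]] :=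
  convex_alternative2 C_closed h_convex (f_convex i) not_both_neg.
pose lam k := if k == i then 1 - mu else mu * lam' k.
have lam_cons (F : I -> R) : \sum_(k <- i :: j :: s) lam k * F k =
    (1 - mu) * F i + mu * \sum_(k <- j :: s) lam' k * F k.
  rewrite big_cons /lam eqxx mulr_sumr; congr (_ + _).
  apply: eq_big_seq => k ks; rewrite ifN ?mulrA //.
  by apply: contraNneq i_notin => <-.
exists lam; split=> [k|]; first by rewrite /lam; case: ifP => _; rewrite ?subr_ge0 ?mulr_ge0.
split=> [|p Cp]; last by rewrite lam_cons addrC; apply: Hmu.
transitivity (\sum_(k <- i :: j :: s) lam k * 1); first by apply: eq_bigr => k _; rewrite mulr1.
by rewrite lam_cons mulr1 (eq_bigr _ (fun k _ => mulr1 (lam' k))) lam'_sum mulr1 subrK.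
Qed.

Lemma convex_alternative (I : finType) (f : I -> T -> R) (C : T -> Prop) :
  (0 < #|I|)%N -> mix_closed C -> (forall i, mix_convex C (f i)) ->
  (forall p, C p -> ~ (forall i, f i p < 0)) ->
  exists lam : I -> R, isDist lam /\ forall p, C p -> 0 <= \sum_i lam i * f i p.
Proof.
move=> I0 C_closed f_convex not_all_neg; move: I0; rewrite cardE.
case E: (enum I) => [//|i s] _.
have uniq_is : uniq (i :: s) by rewrite -E enum_uniq.
have not_all_neg' p : C p -> ~ (forall j, j \in i :: s -> f j p < 0).
  by move=> Cp Hneg; apply: (not_all_neg p Cp) => k; apply: Hneg; rewrite -E mem_enum.
have [lam [lam0 [lam1 lamC]]] :=
  convex_alternative_seq uniq_is C_closed f_convex not_all_neg'.
exists lam; split=> [|p /lamC]; last by rewrite -E big_enum.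
by split=> //; rewrite -lam1 -E big_enum.
Qed.

End ConvexAlternative.

Section Distributions.
Variable R : realType.

Lemma sumr_pair (I J : finType) (F : I * J -> R) :
  \sum_(p : I * J) F p = \sum_i \sum_j F (i, j).
Proof. by rewrite pair_bigA; apply: eq_bigr => -[]. Qed.

Lemma isDist_exists_gt0 (T : finType) (P : T -> R) : isDist P -> exists t, 0 < P t.
Proof.
case=> P0 P1; have [|t /andP[_ Pt]] := @psumr_neq0P _ _ xpredT P (fun t _ => P0 t).
  by rewrite P1; exact/eqP/oner_neq0.
by exists t.
Qed.

Lemma isDist_delta (T : finType) (t0 : T) : isDist (fun t : T => ((t == t0)%:R : R)).
Proof.
split=> [t|]; first by rewrite ler0n.
by rewrite (bigD1 t0) //= eqxx big1 ?addr0 // => t /negbTE ->.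
Qed.

Lemma isDist_prodDist (I J : finType) (P : I -> R) (Q : J -> R) :
  isDist P -> isDist Q -> isDist (prodDist P Q).
Proof.
move=> [P0 P1] [Q0 Q1]; split=> [[i j]|]; first by rewrite mulr_ge0.
rewrite sumr_pair -P1; apply: eq_bigr => i _.
by rewrite /prodDist /= -mulr_sumr Q1 mulr1.
Qed.

Lemma psumr_gt0 (T : finType) (F : T -> R) t :
  (forall t, 0 <= F t) -> 0 < F t -> 0 < \sum_t F t.
Proof. by move=> F0 Ft; rewrite (bigD1 t) //= ltr_pwDl ?sumr_ge0. Qed.

Lemma isDist_jointDist (X Y : finType) (P : X -> R) (W : X -> Y -> R) :
  isDist P -> isChannel W -> isDist (jointDist P W).
Proof.
move=> [P0 P1] W_chan; split=> [[x y]|]; first by rewrite mulr_ge0 ?(W_chan x).1.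
rewrite sumr_pair -P1; apply: eq_bigr => x _.
by rewrite /jointDist /= -mulr_sumr (W_chan x).2 mulr1.
Qed.

Lemma dist_avg_ge (T : finType) (P F : T -> R) c : isDist P ->
  (forall t, c <= F t) -> c <= \sum_t P t * F t.
Proof.
move=> [P0 P1] cF; rewrite -[c]mul1r -P1 mulr_suml.
by apply: ler_sum => t _; apply: ler_wpM2l.
Qed.

Lemma dist_avg_le (T : finType) (P F : T -> R) c : isDist P ->
  (forall t, F t <= c) -> \sum_t P t * F t <= c.
Proof.
move=> [P0 P1] Fc; rewrite -[c]mul1r -P1 mulr_suml.
by apply: ler_sum => t _; apply: ler_wpM2l.
Qed.

Definition marginal1 (I J : finType) (Q : I * J -> R) (i : I) := \sum_j Q (i, j).

(* Junk value: for [marginal1 Q i = 0] this is the zero function. *)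
Definition conditional (I J : finType) (Q : I * J -> R) (i : I) (j : J) :=
  Q (i, j) / marginal1 Q i.

Section Marginals.
Variables (I J : finType) (Q : I * J -> R).
Hypothesis dQ : isDist Q.

Lemma marginal1_ge0 i : 0 <= marginal1 Q i.
Proof. by apply: sumr_ge0 => j _; exact: dQ.1. Qed.

Lemma isDist_marginal1 : isDist (marginal1 Q).
Proof. by split; [exact: marginal1_ge0 | rewrite /marginal1 -sumr_pair dQ.2]. Qed.

Lemma isDist_conditional i : 0 < marginal1 Q i -> isDist (conditional Q i).
Proof.
move=> Qi; split=> [j|]; first by rewrite divr_ge0 ?marginal1_ge0 ?dQ.1.
by rewrite -mulr_suml mulfV ?gt_eqF.
Qed.

Lemma marginal1_eq0 i j : marginal1 Q i = 0 -> Q (i, j) = 0.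
Proof. by move=> Qi; apply: (psumr_eq0P _ Qi) => // k _; exact: dQ.1. Qed.

Lemma marginal1_conditional i j : marginal1 Q i != 0 ->
  Q (i, j) = marginal1 Q i * conditional Q i j.
Proof. by move=> Qi; rewrite /conditional mulrC divfK. Qed.

End Marginals.

Definition mix_fun (T : Type) (l : R) (p q : T -> R) := fun t => l * p t + (1 - l) * q t.

Lemma isDist_mix_closed (T : finType) : mix_closed (@mix_fun T) (@isDist R T).
Proof.
move=> l p q /andP[l0 l1] [p0 p1] [q0 q1]; split=> [t|].
  by rewrite /mix_fun addr_ge0 // mulr_ge0 ?p0 ?q0 ?subr_ge0.
by rewrite /mix_fun big_split /= -!mulr_sumr p1 q1 !mulr1 subrKC.
Qed.

Definition mix_uniform (T : finType) (r : R) (P : T -> R) :=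
  fun t => r * P t + (1 - r) / #|T|%:R.

Lemma isDist_mix_uniform (T : finType) r (P : T -> R) : 0 <= r < 1 -> isDist P ->
  isDist (mix_uniform r P) /\ forall t, 0 < mix_uniform r P t.
Proof.
move=> /andP[r0 r1] dP; have [t0 _] := isDist_exists_gt0 dP.
have T0 : 0 < #|T|%:R :> R by rewrite ltr0n; apply/card_gt0P; exists t0.
have u0 : 0 < (1 - r) / #|T|%:R by rewrite divr_gt0 // subr_gt0.
have pos t : 0 < mix_uniform r P t by rewrite ltr_wpDl // mulr_ge0 ?dP.1.
split=> //; split=> [t|]; first exact: ltW.
rewrite big_split /= -mulr_sumr dP.2 mulr1 sumr_const.
by rewrite -[_ *+ #|T|]mulr_natr mulfVK ?gt_eqF // subrKC.
Qed.

Lemma renyiDiv_ge0 (T : finType) (a : R) (P Q : T -> R) :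
  0 < a -> a != 1 -> isDist P -> isDist Q -> (0 <= renyiDiv a P Q)%E.
Proof.
move=> a0 a1 [P0 P1] [Q0 Q1]; rewrite /renyiDiv.
set s := \sum_(t | 0 < P t) _.
case: ifPn => [_|abscont]; first exact: le0y.
case: ifPn => [_|s0]; first exact: le0y.
have sumP : \sum_(t | 0 < P t) P t = 1.
  rewrite -P1 [RHS](bigID (fun t => 0 < P t)) /= [X in _ + X]big1 ?addr0 // => t.
  by rewrite lt_def P0 andbT negbK => /eqP.
have sumQ : \sum_(t | 0 < P t) Q t <= 1.
  by rewrite -Q1 [leRHS](bigID (fun t => 0 < P t)) /= lerDl sumr_ge0.
rewrite lee_fin; have [a_lt1|a_ge1] := ltP a 1.
- have s_le1 : s <= 1.
    apply: (@le_trans _ _ (\sum_(t | 0 < P t) (a * P t + (1 - a) * Q t))).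
      by apply: ler_sum => t _; apply: powR_weighted_amgm; rewrite ?a0.
    rewrite big_split /= -!mulr_sumr sumP mulr1.
    have := ler_wpM2l (_ : 0 <= 1 - a) sumQ; rewrite subr_ge0 ltW // => /(_ isT).
    lra.
  by rewrite mulr_le0 ?ln_le0 // invr_le0 subr_le0 ltW.
- have a_gt1 : 1 < a by rewrite lt_neqAle eq_sym a1.
  move: abscont; rewrite a_gt1 negbK => /forallP abscont.
  have Qpos t : 0 < P t -> 0 < Q t.
    rewrite !lt_def P0 Q0 !andbT; apply: contra => /eqP Qt.
    by have /implyP := abscont t; rewrite Qt eqxx; apply.
  have s_ge1 : 1 <= s.
    apply: (@le_trans _ _ (\sum_(t | 0 < P t) (a * P t - (a - 1) * Q t))).
      rewrite sumrB -!mulr_sumr sumP mulr1.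
      have := ler_wpM2l (_ : 0 <= a - 1) sumQ; rewrite subr_ge0 ltW // => /(_ isT).
      lra.
    by apply: ler_sum => t Pt; apply: powR_tangent_le; rewrite ?P0 ?Qpos.
  by rewrite mulr_ge0 ?ln_ge0 // invr_ge0 subr_ge0 ltW.
Qed.

End Distributions.

Section RenyiLog.
Variables (R : realType) (a : R).

Definition renyi_log (s : R) : \bar R :=
  if s == 0 then +oo%E else ((a - 1)^-1 * ln s)%:E.

Lemma renyi_logM s1 s2 : 0 <= s1 -> 0 <= s2 ->
  renyi_log (s1 * s2) = (renyi_log s1 + renyi_log s2)%E.
Proof.
rewrite /renyi_log !le_eqVlt => /predU1P[<-|s1_gt0] /predU1P[<-|s2_gt0].
- by rewrite mul0r eqxx.
- by rewrite mul0r eqxx gt_eqF // addye.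
- by rewrite mulr0 eqxx gt_eqF // addey.
by rewrite mulf_eq0 !gt_eqF //= -EFinD -mulrDr lnM.
Qed.

Lemma renyi_log_expR w : a != 1 -> renyi_log (expR (w * (a - 1))) = w%:E.
Proof.
move=> a1; rewrite /renyi_log gt_eqF ?expR_gt0 // expRK mulrC mulfK //.
by rewrite subr_eq0.
Qed.

Lemma renyi_log_lt1_le s1 s2 : a < 1 -> 0 <= s1 -> s1 <= s2 ->
  (renyi_log s2 <= renyi_log s1)%E.
Proof.
move=> a1; rewrite le_eqVlt /renyi_log => /predU1P[<-|s1_gt0] s12.
  by rewrite eqxx leey.
have s2_gt0 := lt_le_trans s1_gt0 s12.
rewrite !gt_eqF // lee_fin; apply: ler_wnM2l; first by rewrite invr_le0 subr_le0 ltW.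
by rewrite ler_ln.
Qed.

Lemma renyi_log_gt1_le s1 s2 : 1 < a -> 0 < s1 -> s1 <= s2 ->
  (renyi_log s1 <= renyi_log s2)%E.
Proof.
move=> a1 s1_gt0 s12; have s2_gt0 := lt_le_trans s1_gt0 s12.
rewrite /renyi_log !gt_eqF // lee_fin; apply: ler_wpM2l; first by rewrite invr_ge0 subr_ge0 ltW.
by rewrite ler_ln.
Qed.

End RenyiLog.

Section ChannelQuantities.
Variables (R : realType) (X Y : finType) (W : X -> Y -> R) (a : R).

Definition renyi_row x (Q : Y -> R) := \sum_y Q y `^ a * W x y `^ (1 - a).
Definition renyi_sum (P : X -> R) Q := \sum_x P x * renyi_row x Q.
(* [P x Q] is absolutely continuous with respect to the joint law [P W]. *)
Definition support_compatible (P : X -> R) (Q : Y -> R) : bool :=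
  [forall x, forall y, (0 < P x) && (0 < Q y) ==> (W x y != 0)].
Definition chanDiv P Q := renyiDiv a (prodDist P Q) (jointDist P W).

Lemma renyi_row_ge0 x Q : 0 <= renyi_row x Q.
Proof. by apply: sumr_ge0 => y _; rewrite mulr_ge0 ?powR_ge0. Qed.

Lemma renyi_sum_ge0 P Q : (forall x, 0 <= P x) -> 0 <= renyi_sum P Q.
Proof. by move=> P0; apply: sumr_ge0 => x _; rewrite mulr_ge0 ?renyi_row_ge0. Qed.

Definition renyi_term (P : X -> R) (Q : Y -> R) y :=
  Q y `^ a * \sum_x P x * W x y `^ (1 - a).

Lemma renyi_sum_by_output P Q : renyi_sum P Q = \sum_y renyi_term P Q y.
Proof.
rewrite /renyi_sum /renyi_row; under eq_bigr do rewrite mulr_sumr.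
rewrite exchange_big; apply: eq_bigr => y _; rewrite /renyi_term mulr_sumr.
by apply: eq_bigr => x _; rewrite mulrCA.
Qed.

Lemma support_compatibleP P Q :
  reflect (forall x y, 0 < P x -> 0 < Q y -> W x y != 0) (support_compatible P Q).
Proof.
apply: (iffP forallP) => [H x y Px Qy|H x].
  by have /forallP/(_ y)/implyP := H x; rewrite Px Qy; apply.
by apply/forallP => y; apply/implyP => /andP[]; exact: H.
Qed.

Lemma renyi_row_concave x l p q : 0 < a <= 1 -> 0 <= l <= 1 ->
    (forall y, 0 <= p y) -> (forall y, 0 <= q y) ->
  l * renyi_row x p + (1 - l) * renyi_row x q <= renyi_row x (mix_fun l p q).
Proof.
move=> a01 l01 p0 q0; rewrite /renyi_row !mulr_sumr -big_split /=.
apply: ler_sum => y _; rewrite !mulrA -mulrDl.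
by apply: ler_wpM2r; [exact: powR_ge0 | exact: powR_concave_comb].
Qed.

Lemma renyi_row_convex x l p q : 1 <= a -> 0 <= l <= 1 ->
    (forall y, 0 <= p y) -> (forall y, 0 <= q y) ->
  renyi_row x (mix_fun l p q) <= l * renyi_row x p + (1 - l) * renyi_row x q.
Proof.
move=> a1 l01 p0 q0; rewrite /renyi_row !mulr_sumr -big_split /=.
apply: ler_sum => y _; rewrite !mulrA -mulrDl.
by apply: ler_wpM2r; [exact: powR_ge0 | exact: powR_convex_comb].
Qed.

Lemma U_alpha_ge P w : isDist P -> (forall Q, isDist Q -> (w <= chanDiv P Q)%E) ->
  (w <= U_alpha a W)%E.
Proof.
move=> dP H; apply: (@le_trans _ _ (ereal_inf [set chanDiv P Q | Q in @isDist R Y])).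
  by apply/ereal_infP => _ [Q dQ <-]; exact: H.
by apply: ereal_sup_ubound; exists P.
Qed.

Lemma U_alpha_ge0 : 0 < a -> a != 1 -> isChannel W -> (0 < #|X|)%N ->
  (0 <= U_alpha a W)%E.
Proof.
move=> a0 a1 W_chan /card_gt0P[x0 _].
apply: (U_alpha_ge (isDist_delta R x0)) => Q dQ; apply: renyiDiv_ge0 => //.
  exact: isDist_prodDist (isDist_delta R x0) dQ.
exact: isDist_jointDist (isDist_delta R x0) W_chan.
Qed.

Hypothesis W_ge0 : forall x y, 0 <= W x y.

Lemma chanDivE P Q : a != 0 -> (forall x, 0 <= P x) -> (forall y, 0 <= Q y) ->
  chanDiv P Q = if (1 < a) && ~~ support_compatible P Q then +oo%E
                else renyi_log a (renyi_sum P Q).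
Proof.
move=> a0 P0 Q0; rewrite /chanDiv /renyiDiv /=.
have -> : [forall t, (jointDist P W t == 0) ==> (prodDist P Q t == 0)] =
    support_compatible P Q.
  apply/forallP/support_compatibleP => [H x y Px Qy|H [x y]].
    apply: contraTneq (H (x, y)) => W0.
    by rewrite /jointDist /prodDist /= W0 mulr0 eqxx mulf_neq0 ?gt_eqF.
  rewrite /jointDist /prodDist /= mulf_eq0 mulf_eq0.
  have [//|Px] := eqVneq (P x) 0.
  have [|Qy] := eqVneq (Q y) 0; first by rewrite orbT implybT.
  by rewrite /= (negbTE (H x y _ _)) // lt_def ?Px ?Qy ?P0 ?Q0.
congr (if _ then _ else _).
suff -> : \sum_(t | 0 < prodDist P Q t) prodDist P Q t `^ a * jointDist P W t `^ (1 - a)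
    = renyi_sum P Q by [].
rewrite big_mkcond sumr_pair; apply: eq_bigr => x _.
rewrite mulr_sumr; apply: eq_bigr => y _; rewrite /prodDist /jointDist /=.
case: ifPn => [PQ|].
  have Px : 0 < P x.
    by rewrite lt_def P0 andbT; apply: contraTneq PQ => ->; rewrite mul0r ltxx.
  rewrite powRM ?P0 ?Q0 // powRM ?P0 ?W_ge0 // mulrACA -powRD.
    by rewrite addrC subrK powRr1 ?P0 // mulrA.
  by rewrite (gt_eqF Px) implybT.
rewrite lt_def mulr_ge0 ?P0 ?Q0 // andbT negbK mulf_eq0 => /orP[] /eqP->.
  by rewrite !mul0r.
by rewrite powR0 // !mul0r mulr0.
Qed.

Lemma renyi_sum_gt0 P Q : isDist P -> isDist Q -> support_compatible P Q ->
  0 < renyi_sum P Q.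
Proof.
move=> dP dQ /support_compatibleP PQ.
have [x Px] := isDist_exists_gt0 dP; have [y Qy] := isDist_exists_gt0 dQ.
have Wxy : 0 < W x y by rewrite lt_def PQ ?W_ge0.
apply: (psumr_gt0 (t := x)) => [x'|]; first by rewrite mulr_ge0 ?dP.1 ?renyi_row_ge0.
rewrite mulr_gt0 //; apply: (psumr_gt0 (t := y)) => [y'|]; first by rewrite mulr_ge0 ?powR_ge0.
by rewrite mulr_gt0 ?powR_gt0.
Qed.

End ChannelQuantities.

Section Minimax.
Variables (R : realType) (X Y : finType) (W : X -> Y -> R) (a : R).
Hypotheses (W_ge0 : forall x y, 0 <= W x y) (X_gt0 : (0 < #|X|)%N).

(* A minimax step: if no output law bounds all rows at once, the alternative
   theorem yields an input law whose average row stays on the wrong side of the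
   bound for every output law, i.e. a witness for [w <= U_alpha a W]. *)
Lemma U_alpha_minimax_lt1 w : 0 < a -> a < 1 -> (U_alpha a W < w%:E)%E ->
  exists2 Q, isDist Q & forall x, expR (w * (a - 1)) <= renyi_row W a x Q.
Proof.
move=> a0 a1 Uw; set t := expR (w * (a - 1)).
have a_ngt1 : (1 < a) = false by rewrite ltNge ltW.
apply: boolp.contrapT => no_Q.
have [P [[P0 P1] HP]] : exists P, isDist P /\
    forall Q, isDist Q -> 0 <= \sum_x P x * (t - renyi_row W a x Q).
  apply: (convex_alternative X_gt0 (@isDist_mix_closed R Y)).
    move=> x l p q l01 [p0 _] [q0 _].
    by have := renyi_row_concave W x (_ : 0 < a <= 1) l01 p0 q0; rewrite a0 ltW //; lra.
  by move=> Q dQ Hneg; apply: no_Q; exists Q => // x; have := Hneg x; lra.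
have : (w%:E <= U_alpha a W)%E.
  apply: (U_alpha_ge (conj P0 P1)) => Q dQ.
  have := HP Q dQ; rewrite (eq_bigr _ (fun x _ => mulrBr _ _ _)) sumrB -mulr_suml.
  rewrite P1 mul1r subr_ge0 => sum_le.
  rewrite chanDivE ?gt_eqF ?a_ngt1 ?dQ.1 //=; last by case: dQ.
  rewrite -(renyi_log_expR w (negbT (lt_eqF a1))).
  exact: renyi_log_lt1_le a1 (renyi_sum_ge0 W a Q P0) sum_le.
by rewrite leNgt Uw.
Qed.

(* Mixing in the uniform distribution makes every input positive, which forces
   absolute continuity, at the price of the slack between [w'] and [w]. *)
Lemma U_alpha_ge_gt1 w' w (lm : X -> R) : 1 < a -> w' < w -> isDist lm ->
  (forall Q, isDist Q -> (forall x y, W x y = 0 -> Q y = 0) ->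
     expR (w * (a - 1)) <= renyi_sum W a lm Q) ->
  (w'%:E <= U_alpha a W)%E.
Proof.
move=> a1 w'w dlm t_le; have a0 : 0 < a by apply: lt_trans a1.
set t := expR (w * (a - 1)); set t' := expR (w' * (a - 1)).
have t_gt0 : 0 < t by apply: expR_gt0.
have t'_gt0 : 0 < t' by apply: expR_gt0.
have t'_lt_t : t' < t by rewrite ltr_expR ltr_pM2r ?subr_gt0.
set r := t' / t.
have r01 : 0 <= r < 1 by rewrite divr_ge0 ?ltW //= ltr_pdivrMr // mul1r.
have [dP P_gt0] := isDist_mix_uniform r01 dlm.
apply: (U_alpha_ge dP) => Q dQ; have [[Q0 _] [P0 _]] := (dQ, dP).
rewrite chanDivE ?gt_eqF // a1 /=.
case: ifPn => [_|/negPn/support_compatibleP PQ]; first exact: leey.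
have QW x y : W x y = 0 -> Q y = 0.
  move=> /eqP Wxy; apply: contraTeq Wxy => Qy.
  by apply: PQ (P_gt0 x) _; rewrite lt_def Qy Q0.
have : r * t <= renyi_sum W a (mix_uniform r lm) Q.
  apply: (@le_trans _ _ (r * renyi_sum W a lm Q)).
    by apply: ler_wpM2l; [case/andP: r01 | exact: t_le].
  rewrite /renyi_sum mulr_sumr; apply: ler_sum => x _.
  rewrite /mix_uniform mulrDl mulrA lerDl mulr_ge0 ?renyi_row_ge0 //.
  by rewrite divr_ge0 ?subr_ge0 ?(ltW (andP r01).2).
rewrite /r divfK ?gt_eqF // -(renyi_log_expR w' (negbT (gt_eqF a1))).
exact: renyi_log_gt1_le a1 t'_gt0.
Qed.

Lemma U_alpha_minimax_gt1 w : 1 < a -> (U_alpha a W < w%:E)%E ->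
  exists2 Q, isDist Q & forall x, (forall y, 0 < Q y -> W x y != 0) /\
    renyi_row W a x Q <= expR (w * (a - 1)).
Proof.
move=> a1 Uw; set t := expR (w * (a - 1)).
have [w' Uw' w'w] : exists2 w', (U_alpha a W < w'%:E)%E & w' < w.
  move: Uw; case: (U_alpha a W) => [u| |] //= Uw.
    by exists ((u + w) / 2); move: Uw; rewrite !lte_fin; lra.
  by exists (w - 1); rewrite ?ltNyr //; lra.
apply: boolp.contrapT => no_Q.
pose C (Q : Y -> R) := isDist Q /\ forall x y, W x y = 0 -> Q y = 0.
have C_closed : mix_closed (@mix_fun R Y) C.
  move=> l p q l01 [dp p0] [dq q0]; split; first exact: isDist_mix_closed.
  by move=> x y Wxy; rewrite /mix_fun (p0 x y Wxy) (q0 x y Wxy) !mulr0 addr0.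
have [lm [dlm Hlm]] : exists lm, isDist lm /\
    forall Q, C Q -> 0 <= \sum_x lm x * (renyi_row W a x Q - t).
  apply: (convex_alternative X_gt0 C_closed).
    move=> x l p q l01 [[p0 _] _] [[q0 _] _].
    by have := renyi_row_convex W x (ltW a1) l01 p0 q0; lra.
  move=> Q [dQ QW] Hneg; apply: no_Q; exists Q => // x.
  split=> [y|]; last by have := Hneg x; lra.
  by apply: contraTneq => /QW ->; rewrite ltxx.
have : (w'%:E <= U_alpha a W)%E; last by rewrite leNgt Uw'.
apply: (U_alpha_ge_gt1 a1 w'w dlm) => Q dQ QW; have := Hlm Q (conj dQ QW).
rewrite (eq_bigr _ (fun x _ => mulrBr _ _ _)) sumrB -mulr_suml.
by rewrite dlm.2 mul1r subr_ge0.
Qed.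

End Minimax.

Section ProductChannel.
Variables (R : realType) (X1 Y1 X2 Y2 : finType).
Variables (W1 : X1 -> Y1 -> R) (W2 : X2 -> Y2 -> R) (a : R).
Hypotheses (W1_ge0 : forall x y, 0 <= W1 x y) (W2_ge0 : forall x y, 0 <= W2 x y).
Hypothesis a_gt0 : 0 < a.
Local Notation W12 := (prodChannel W1 W2).

Let W12_ge0 x y : 0 <= W12 x y.
Proof. exact: mulr_ge0. Qed.

Lemma renyi_row_prodDist x (Q1 : Y1 -> R) (Q2 : Y2 -> R) :
  (forall y, 0 <= Q1 y) -> (forall y, 0 <= Q2 y) ->
  renyi_row W12 a x (prodDist Q1 Q2) = renyi_row W1 a x.1 Q1 * renyi_row W2 a x.2 Q2.
Proof.
move=> Q1_ge0 Q2_ge0; rewrite /renyi_row sumr_pair big_distrlr /=.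
apply: eq_bigr => y1 _; apply: eq_bigr => y2 _.
by rewrite /prodDist /prodChannel /= !powRM // mulrACA.
Qed.

Lemma chanDiv_prodChannel_le_lt1 w1 w2 (Q1 : Y1 -> R) (Q2 : Y2 -> R) P :
  a < 1 -> isDist Q1 -> isDist Q2 -> isDist P ->
  (forall x, expR (w1 * (a - 1)) <= renyi_row W1 a x Q1) ->
  (forall x, expR (w2 * (a - 1)) <= renyi_row W2 a x Q2) ->
  (chanDiv W12 a P (prodDist Q1 Q2) <= (w1 + w2)%:E)%E.
Proof.
move=> a1 dQ1 dQ2 dP H1 H2; case: (dQ1) (dQ2) (dP) => Q1_ge0 _ [Q2_ge0 _] [P_ge0 _].
rewrite chanDivE ?gt_eqF //; last by move=> [] *; exact: mulr_ge0.
rewrite ltNge (ltW a1) /= -(renyi_log_expR (w1 + w2) (negbT (lt_eqF a1))).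
apply: renyi_log_lt1_le a1 _ _; first by rewrite ltW ?expR_gt0.
rewrite mulrDl expRD; apply: dist_avg_ge dP _ => x.
rewrite renyi_row_prodDist //.
by apply: ler_pM; rewrite ?(ltW (expR_gt0 _)) ?H1 ?H2.
Qed.

Lemma chanDiv_prodChannel_le_gt1 w1 w2 (Q1 : Y1 -> R) (Q2 : Y2 -> R) P :
  1 < a -> isDist Q1 -> isDist Q2 -> isDist P ->
  (forall x, (forall y, 0 < Q1 y -> W1 x y != 0) /\
             renyi_row W1 a x Q1 <= expR (w1 * (a - 1))) ->
  (forall x, (forall y, 0 < Q2 y -> W2 x y != 0) /\
             renyi_row W2 a x Q2 <= expR (w2 * (a - 1))) ->
  (chanDiv W12 a P (prodDist Q1 Q2) <= (w1 + w2)%:E)%E.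
Proof.
move=> a1 dQ1 dQ2 dP H1 H2; case: (dQ1) (dQ2) (dP) => Q1_ge0 _ [Q2_ge0 _] [P_ge0 _].
have dQ := isDist_prodDist dQ1 dQ2.
have compat : support_compatible W12 P (prodDist Q1 Q2).
  apply/support_compatibleP => x [y1 y2] _; rewrite /prodDist /prodChannel /=.
  rewrite lt_def mulf_eq0 negb_or => /andP[/andP[Q1y Q2y] _].
  by rewrite mulf_neq0 // ?(H1 x.1).1 ?(H2 x.2).1 // lt_def ?Q1y ?Q2y ?Q1_ge0 ?Q2_ge0.
rewrite chanDivE ?gt_eqF //; last by move=> [] *; exact: mulr_ge0.
rewrite compat andbF -(renyi_log_expR (w1 + w2) (negbT (gt_eqF a1))).
apply: renyi_log_gt1_le a1 (renyi_sum_gt0 a W12_ge0 dP dQ compat) _.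
rewrite mulrDl expRD; apply: dist_avg_le dP _ => x.
rewrite renyi_row_prodDist //.
by apply: ler_pM; rewrite ?renyi_row_ge0 ?(H1 x.1).2 ?(H2 x.2).2.
Qed.

Section SplitOutput.
Variables (P1 : X1 -> R) (P2 : X2 -> R) (Q : Y1 * Y2 -> R).
Hypotheses (dP1 : isDist P1) (dQ : isDist Q).
Local Notation m := (marginal1 Q).
Local Notation A := (renyi_term W1 a P1 m).
Local Notation D y1 := (renyi_sum W2 a P2 (conditional Q y1)).

Lemma renyi_sum_prodChannel :
  renyi_sum W12 a (prodDist P1 P2) Q = \sum_y1 A y1 * D y1.
Proof.
have row_split x2 y1 : \sum_y2 Q (y1, y2) `^ a * W2 x2 y2 `^ (1 - a) =
    m y1 `^ a * renyi_row W2 a x2 (conditional Q y1).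
  have [m0|m_neq0] := eqVneq (m y1) 0.
    rewrite m0 powR0 ?gt_eqF // mul0r; apply: big1 => y2 _.
    by rewrite (marginal1_eq0 dQ _ m0) powR0 ?gt_eqF // mul0r.
  rewrite /renyi_row mulr_sumr; apply: eq_bigr => y2 _.
  rewrite (marginal1_conditional _ m_neq0) powRM ?mulrA ?marginal1_ge0 //.
  by rewrite divr_ge0 ?marginal1_ge0 ?dQ.1.
have row12 x1 x2 : renyi_row W12 a (x1, x2) Q =
    \sum_y1 W1 x1 y1 `^ (1 - a) * (m y1 `^ a * renyi_row W2 a x2 (conditional Q y1)).
  rewrite /renyi_row sumr_pair; apply: eq_bigr => y1 _.
  rewrite -row_split mulr_sumr; apply: eq_bigr => y2 _.
  by rewrite /prodChannel /= powRM // mulrCA.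
rewrite /renyi_sum sumr_pair.
under eq_bigr => x1 _ do under eq_bigr => x2 _ do rewrite row12 mulr_sumr.
under eq_bigr => x1 _ do rewrite exchange_big.
rewrite exchange_big; apply: eq_bigr => y1 _.
rewrite /renyi_term /renyi_sum -mulrA big_distrlr /= mulr_sumr; apply: eq_bigr => x1 _.
rewrite mulr_sumr; apply: eq_bigr => x2 _.
by rewrite /prodDist /=; ring.
Qed.

Let A_ge0 y1 : 0 <= A y1.
Proof.
by rewrite mulr_ge0 ?powR_ge0 // sumr_ge0 // => x1 _; rewrite mulr_ge0 ?powR_ge0 ?dP1.1.
Qed.

Let A_eq0 y1 : ~~ (0 < m y1) -> A y1 = 0.
Proof.
rewrite lt_def marginal1_ge0 // andbT negbK => /eqP m0.
by rewrite /renyi_term m0 powR0 ?gt_eqF // mul0r.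
Qed.

Let m_pos : exists y1, 0 < m y1.
Proof. exact: isDist_exists_gt0 (isDist_marginal1 dQ). Qed.

Lemma renyi_sum_prodChannel_le_max : exists2 y1, 0 < m y1 &
  renyi_sum W12 a (prodDist P1 P2) Q <= renyi_sum W1 a P1 m * D y1.
Proof.
have [y0 my0] := m_pos.
have [ys mys Dmax] := @arg_maxP _ _ _ y0 (fun y1 => 0 < m y1) (fun y1 => D y1) my0.
exists ys => //; rewrite renyi_sum_prodChannel renyi_sum_by_output mulr_suml.
apply: ler_sum => y1 _; have [my1|/A_eq0->] := boolP (0 < m y1); last by rewrite !mul0r.
by apply: ler_wpM2l; [exact: A_ge0 | exact: Dmax].
Qed.

Lemma renyi_sum_prodChannel_ge_min : exists2 y1, 0 < m y1 &
  renyi_sum W1 a P1 m * D y1 <= renyi_sum W12 a (prodDist P1 P2) Q.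
Proof.
have [y0 my0] := m_pos.
have [ys mys Dmin] := @arg_minP _ _ _ y0 (fun y1 => 0 < m y1) (fun y1 => D y1) my0.
exists ys => //; rewrite renyi_sum_prodChannel renyi_sum_by_output mulr_suml.
apply: ler_sum => y1 _; have [my1|/A_eq0->] := boolP (0 < m y1); last by rewrite !mul0r.
by apply: ler_wpM2l; [exact: A_ge0 | exact: Dmin].
Qed.

End SplitOutput.

Lemma support_compatible_marginal1 P1 P2 Q : isDist P2 -> isDist Q ->
  support_compatible W12 (prodDist P1 P2) Q -> support_compatible W1 P1 (marginal1 Q).
Proof.
move=> dP2 dQ /support_compatibleP PQ; apply/support_compatibleP => x1 y1 Px1 my1.
have [x2 Px2] := isDist_exists_gt0 dP2.
have my1_neq0 : marginal1 Q y1 <> 0 by apply/eqP; rewrite lt0r_neq0.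
have [y2 /andP[_ Qy]] := psumr_neq0P (fun y2 _ => dQ.1 (y1, y2)) my1_neq0.
by have := PQ (x1, x2) (y1, y2) (mulr_gt0 Px1 Px2) Qy; rewrite mulf_eq0 negb_or => /andP[].
Qed.

Lemma support_compatible_conditional P1 P2 Q y1 : isDist P1 -> isDist Q ->
  support_compatible W12 (prodDist P1 P2) Q -> support_compatible W2 P2 (conditional Q y1).
Proof.
move=> dP1 dQ /support_compatibleP PQ; apply/support_compatibleP => x2 y2 Px2.
have [x1 Px1] := isDist_exists_gt0 dP1.
rewrite /conditional; have [->|m_neq0] := eqVneq (marginal1 Q y1) 0.
  by rewrite invr0 mulr0 ltxx.
rewrite pmulr_lgt0 => [Qy|]; last by rewrite invr_gt0 lt_def m_neq0 marginal1_ge0.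
by have := PQ (x1, x2) (y1, y2) (mulr_gt0 Px1 Px2) Qy; rewrite mulf_eq0 negb_or => /andP[].
Qed.

Lemma chanDiv_prodChannel_ge P1 P2 Q : a != 1 -> isDist P1 -> isDist P2 -> isDist Q ->
  exists Q1 Q2, [/\ isDist Q1, isDist Q2 &
    (chanDiv W1 a P1 Q1 + chanDiv W2 a P2 Q2 <= chanDiv W12 a (prodDist P1 P2) Q)%E].
Proof.
move=> a1 dP1 dP2 dQ; have dP12 := isDist_prodDist dP1 dP2.
case: (dP1) (dP2) (dP12) => P1_ge0 _ [P2_ge0 _] [P12_ge0 _].
case: (dQ) (isDist_marginal1 dQ) => Q_ge0 _ [m_ge0 _].
have [a_lt1|a_gt1|/eqP] := ltgtP a 1; last by rewrite (negbTE a1).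
- have [ys mys s_le] := renyi_sum_prodChannel_le_max P2 dP1 dQ.
  have [c_ge0 _] := isDist_conditional dQ mys.
  exists (marginal1 Q), (conditional Q ys).
  split; [exact: isDist_marginal1 | exact: isDist_conditional |].
  have a_ngt1 : (1 < a) = false by rewrite ltNge ltW.
  rewrite (chanDivE W12_ge0) ?(chanDivE W1_ge0) ?(chanDivE W2_ge0) ?gt_eqF ?a_ngt1 //=.
  rewrite -renyi_logM ?renyi_sum_ge0 //.
  exact: renyi_log_lt1_le a_lt1 (renyi_sum_ge0 _ _ _ P12_ge0) s_le.
- have [ys mys s_ge] := renyi_sum_prodChannel_ge_min P2 dP1 dQ.
  have dc := isDist_conditional dQ mys; have [c_ge0 _] := dc.
  exists (marginal1 Q), (conditional Q ys).
  split=> //; first exact: isDist_marginal1.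
  rewrite (chanDivE W12_ge0) ?(chanDivE W1_ge0) ?(chanDivE W2_ge0) ?gt_eqF ?a_gt1 //=.
  have [compat|] := boolP (support_compatible W12 (prodDist P1 P2) Q); last by rewrite leey.
  have compat1 := support_compatible_marginal1 dP2 dQ compat.
  have compat2 := support_compatible_conditional ys dP1 dQ compat.
  rewrite compat1 compat2 /= -renyi_logM ?renyi_sum_ge0 //.
  apply: renyi_log_gt1_le a_gt1 _ s_ge.
  by rewrite mulr_gt0 ?renyi_sum_gt0 //; exact: isDist_marginal1.
Qed.

End ProductChannel.

Lemma adde_ereal_sup_le (R : realType) (x z : \bar R) (S : set \bar R) :
  (forall s, S s -> (x + s <= z)%E) -> (x + ereal_sup S <= z)%E.
Proof.
case: x => [r| |] H; last exact: leNye.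
  by rewrite -leeBrDl //; apply/ereal_supP => s Ss; rewrite leeBrDl //; exact: H.
have [->|Sn] := eqVneq (ereal_sup S) -oo%E; first exact: leNye.
have [s Ss s_neq] : exists2 s, S s & s != -oo%E.
  apply: boolp.contrapT => no_s; move/eqP: Sn; apply; apply/ereal_sup_ninfty => s Ss.
  by apply: boolp.contrapT => /eqP s_neq; apply: no_s; exists s.
by have := H s Ss; rewrite addye // leye_eq => /eqP ->; exact: leey.
Qed.

Section Additivity.
Variables (R : realType) (X1 Y1 X2 Y2 : finType) (a : R).
Variables (W1 : X1 -> Y1 -> R) (W2 : X2 -> Y2 -> R).
Hypotheses (a_gt0 : 0 < a) (a_neq1 : a != 1).
Hypotheses (X1_gt0 : (0 < #|X1|)%N) (X2_gt0 : (0 < #|X2|)%N).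
Hypotheses (W1_chan : isChannel W1) (W2_chan : isChannel W2).

Let W1_ge0 x y : 0 <= W1 x y. Proof. exact: (W1_chan x).1. Qed.
Let W2_ge0 x y : 0 <= W2 x y. Proof. exact: (W2_chan x).1. Qed.

Lemma U_alpha_prodChannel_ge :
  (U_alpha a W1 + U_alpha a W2 <= U_alpha a (prodChannel W1 W2))%E.
Proof.
apply: adde_ereal_sup_le => _ [P2 dP2 <-]; rewrite addeC.
apply: adde_ereal_sup_le => _ [P1 dP1 <-]; rewrite addeC.
apply: (U_alpha_ge (isDist_prodDist dP1 dP2)) => Q dQ.
have [Q1 [Q2 [dQ1 dQ2 H]]] := chanDiv_prodChannel_ge W1_ge0 W2_ge0 a_gt0 a_neq1 dP1 dP2 dQ.
apply: le_trans H; apply: leeD; apply: ereal_inf_lbound; [exists Q1 | exists Q2] => //.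
Qed.

Lemma U_alpha_prodChannel_le_add w1 w2 :
  (U_alpha a W1 < w1%:E)%E -> (U_alpha a W2 < w2%:E)%E ->
  (U_alpha a (prodChannel W1 W2) <= (w1 + w2)%:E)%E.
Proof.
move=> Uw1 Uw2.
suff [Q1 [Q2 [dQ1 dQ2 HQ]]] : exists Q1 Q2, [/\ isDist Q1, isDist Q2 &
    forall P, isDist P -> (chanDiv (prodChannel W1 W2) a P (prodDist Q1 Q2) <= (w1 + w2)%:E)%E].
  apply/ereal_supP => _ [P dP <-]; apply: le_trans (HQ P dP).
  by apply: ereal_inf_lbound; exists (prodDist Q1 Q2) => //; exact: isDist_prodDist.
have [a_lt1|a_gt1|/eqP] := ltgtP a 1; last by rewrite (negbTE a_neq1).
- have [Q1 dQ1 H1] := U_alpha_minimax_lt1 W1_ge0 X1_gt0 a_gt0 a_lt1 Uw1.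
  have [Q2 dQ2 H2] := U_alpha_minimax_lt1 W2_ge0 X2_gt0 a_gt0 a_lt1 Uw2.
  by exists Q1, Q2; split=> // P dP; exact: chanDiv_prodChannel_le_lt1.
- have [Q1 dQ1 H1] := U_alpha_minimax_gt1 W1_ge0 X1_gt0 a_gt1 Uw1.
  have [Q2 dQ2 H2] := U_alpha_minimax_gt1 W2_ge0 X2_gt0 a_gt1 Uw2.
  by exists Q1, Q2; split=> // P dP; exact: chanDiv_prodChannel_le_gt1.
Qed.

Lemma U_alpha_prodChannel_le :
  (U_alpha a (prodChannel W1 W2) <= U_alpha a W1 + U_alpha a W2)%E.
Proof.
have := U_alpha_ge0 a_gt0 a_neq1 W2_chan X2_gt0.
have := U_alpha_ge0 a_gt0 a_neq1 W1_chan X1_gt0.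
case E1: (U_alpha a W1) => [u1| |]; rewrite ?leeNy_eq // => _;
  case E2: (U_alpha a W2) => [u2| |]; rewrite ?leeNy_eq // => _;
  rewrite ?addye ?addey ?leey //.
apply/lee_addgt0Pr => e e_gt0; rewrite -EFinD.
have -> : u1 + u2 + e = (u1 + e / 2) + (u2 + e / 2) by field.
by apply: U_alpha_prodChannel_le_add; rewrite ?E1 ?E2 lte_fin; lra.
Qed.

End Additivity.

Unset Implicit Arguments.
Theorem mainTheorem13 (R : realType) (X1 Y1 X2 Y2 : finType) (a : R)
  (W1 : X1 -> Y1 -> R) (W2 : X2 -> Y2 -> R) :
  0 < a -> a != 1 ->
  (0 < #|X1|)%N -> (0 < #|X2|)%N ->
  isChannel W1 -> isChannel W2 ->
  U_alpha a (prodChannel W1 W2) = (U_alpha a W1 + U_alpha a W2)%E.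
Proof.
move=> a_gt0 a_neq1 X1_gt0 X2_gt0 W1_chan W2_chan.
by apply/eqP; rewrite eq_le U_alpha_prodChannel_le ?U_alpha_prodChannel_ge.
Qed.
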